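(* Let $X$ be a finite set with $|X|\ge5$, $k$ an integer with $5<k<|X|-5$, $\mathfrak{C}$ a nonempty symmetric family of choice functions for $\binom{X}{k}$, $\mathcal{F}$ the set of simple averaging functions for $\mathfrak{C}$, and assume $r(\mathcal{F})=2$. Let $a_1,a_2,a_3\in X$ be pairwise distinct. Then there is $g\in\mathcal{F}_{[3]}$ such that $g(\bar b)=b_1$ for every $\bar b\in X^3$ with a repetition, and $g(a_1,a_2,a_3)=a_2$.
   Context: $\binom{X}{k}=\{Y\subseteq X:|Y|=k\}$; choice functions satisfy $c(Y)\in Y$. Symmetric: closed under $c\mapsto\pi*c$, $(\pi*c)(Y)=\pi^{-1}(c(\pi(Y)))$. $\mathcal{F}_{[r]}$: functions $f:X^r\to X$ with $f(a,\dots,a)=a$ such that for all $c_1,\dots,c_r\in\mathfrak{C}$, $Y\mapsto f(c_1(Y),\dots,c_r(Y))$ is in $\mathfrak{C}$. A monarchy is a projection. $r(\mathcal{F})=\min\{r:\text{some } f\in\mathcal{F}_{[r]}\text{ is not a monarchy}\}$. *)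

From HB Require Import structures.
From mathcomp Require Import all_boot all_fingroup.
Set Implicit Arguments. Unset Strict Implicit. Unset Printing Implicit Defensive.

Section ChoiceDefs.
Variables (X : finType) (k : nat).

Definition ksub := {Y : {set X} | #|Y| == k}.

Definition cfun := {ffun ksub -> X}.

Definition is_choice_fun (c : cfun) : Prop := forall Y : ksub, c Y \in val Y.

(* pi(Y) as a k-subset (insubd default never used since pi is injective). *)
Definition perm_ksub (pi : {perm X}) (Y : ksub) : ksub :=
  insubd Y (pi @: val Y).

Definition perm_act (pi : {perm X}) (c : cfun) : cfun :=
  [ffun Y => (pi^-1)%g (c (perm_ksub pi Y))].

Definition symmetric_family (C : {set cfun}) : Prop :=
  forall pi c, c \in C -> perm_act pi c \in C.

Definition in_F (C : {set cfun}) (r : nat) (f : {ffun 'I_r -> X} -> X) : Prop :=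
  (forall a : X, f [ffun _ => a] = a) /\
  (forall cs : 'I_r -> cfun, (forall i, cs i \in C) ->
     [ffun Y => f [ffun i => cs i Y]] \in C).

Definition monarchy (r : nat) (f : {ffun 'I_r -> X} -> X) : Prop :=
  exists i : 'I_r, forall b, f b = b i.

Definition rF_eq (C : {set cfun}) (n : nat) : Prop :=
  (exists f : {ffun 'I_n -> X} -> X, in_F C f /\ ~ monarchy f) /\
  (forall m, m < n -> forall f : {ffun 'I_m -> X} -> X, in_F C f -> monarchy f).

End ChoiceDefs.

From mathcomp Require Import all_boot all_fingroup zify.

(** Binary polymorphisms of C are conservative (a choice function must pick inside
    its k-set), so each is [switch D]: it returns its second argument on the pairs
    of D and its first elsewhere. The admissible sets D contain the full set and are
    closed under intersection, under D |-> {(x, y) | (y, x) \notin D} (hence under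
    union) and, C being symmetric, under relabelling by permutations of X. Relabelling
    shows that if every admissible D containing (u, v) must contain a pair other
    than (u, v) and (v, u), then it must contain every off-diagonal pair; the binary
    non-monarchy given by r(F) = 2 yields an admissible D separating two such pairs,
    so the edge {(u, v), (v, u)} is itself admissible. With s_ij the switch on the
    edge a_i a_j, g(x, y, z) = s_12 (s_12 x y) (s_13 x z) is the required operation. *)

Set Implicit Arguments. Unset Strict Implicit. Unset Printing Implicit Defensive.

Lemma exists_notin (T : finType) (s : seq T) : size s < #|T| -> exists z, z \notin s.
Proof.
move=> lt_sT; have : 0 < #|[predC s]|.
  by rewrite -(ltn_add2l #|s|) addn0 cardC (leq_ltn_trans (card_size s)).
by case/card_gt0P => z; rewrite inE; exists z.
Qed.

Lemma perm_map_uniq (T : finType) (xs ys : seq T) :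
  uniq xs -> uniq ys -> size xs = size ys -> exists pi : {perm T}, map pi xs = ys.
Proof.
elim: xs ys => [|x xs IH] [|y ys] //=; first by exists 1%g.
move=> /andP[xNxs uxs] /andP[yNys uys] [size_xys].
have [pi pi_xs] := IH _ uxs uys size_xys.
exists (pi * tperm (pi x) y)%g; rewrite permM tpermL; congr cons.
rewrite -pi_xs; apply/eq_in_map => z zxs; rewrite permM tpermD //.
  by apply: contraNneq xNxs => /perm_inj ->.
by apply: contraNneq yNys => ->; rewrite -pi_xs map_f.
Qed.

Lemma exists_subset_between (T : finType) (A B : {set T}) n :
  A \subset B -> #|A| <= n <= #|B| ->
  exists Y : {set T}, [/\ A \subset Y, Y \subset B & #|Y| = n].
Proof.
move=> sAB /andP[leAn lenB].
have : 0 < #|[set W : {set T} | W \subset B :\: A & #|W| == n - #|A|]|.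
  by rewrite cards_draws bin_gt0 cardsDS // leq_sub2r.
case/card_gt0P => W; rewrite inE => /andP[sWBA /eqP cardW].
have dWA : [disjoint W & A].
  by rewrite disjoints_subset (subset_trans sWBA) // setDE subsetIr.
exists (A :|: W); split; first exact: subsetUl.
  by rewrite subUset sAB (subset_trans sWBA) ?subsetDl.
have /leqifP := leq_card_setU A W; rewrite disjoint_sym dWA => /eqP->.
by rewrite cardW subnKC.
Qed.

Local Notation i1 := (@Ordinal 3 1 isT).
Local Notation i2 := (@Ordinal 3 2 isT).

Lemma ord3_cases (i : 'I_3) : [|| i == ord0, i == i1 | i == i2].
Proof. by case: i => -[|[|[|]]]. Qed.

Lemma ord3_repeat (T : eqType) (b : 'I_3 -> T) i j :
  i != j -> b i = b j -> [|| b ord0 == b i1, b ord0 == b i2 | b i1 == b i2].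
Proof.
by case/or3P: (ord3_cases i) => /eqP->; case/or3P: (ord3_cases j) => /eqP-> // _ ->;
  rewrite eqxx ?orbT.
Qed.

Section PermKsub.
Variables (X : finType) (k : nat).

Lemma perm_ksub_val (pi : {perm X}) (Y : ksub X k) : val (perm_ksub pi Y) = pi @: val Y.
Proof. by rewrite /perm_ksub val_insubd card_imset ?(valP Y) //; apply: perm_inj. Qed.

Lemma perm_ksubK (pi : {perm X}) : cancel (@perm_ksub X k pi) (perm_ksub pi^-1%g).
Proof.
move=> Y; apply: val_inj; rewrite !perm_ksub_val -imset_comp.
by rewrite (eq_imset (g := id)) ?imset_id // => x /=; rewrite permK.
Qed.

End PermKsub.

Section Polymorphisms.
Variables (X : finType) (k : nat) (C : {set cfun X k}).

Definition polymorphism2 (h : X -> X -> X) : bool :=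
  [forall a, h a a == a] &&
  [forall c1 in C, forall c2 in C, [ffun Y => h (c1 Y) (c2 Y)] \in C].

Lemma polymorphism2P h :
  reflect ((forall a, h a a = a) /\
           (forall c1 c2, c1 \in C -> c2 \in C -> [ffun Y => h (c1 Y) (c2 Y)] \in C))
          (polymorphism2 h).
Proof.
apply: (iffP andP) => [[/forallP idh /forall_inP hC]|[idh hC]]; split.
- by move=> a; apply/eqP.
- by move=> c1 c2 /hC /forall_inP; apply.
- by apply/forallP => a; rewrite idh.
- by apply/forall_inP => c1 /hC c1C; apply/forall_inP; apply: c1C.
Qed.

Lemma eq_polymorphism2 h1 h2 : h1 =2 h2 -> polymorphism2 h1 = polymorphism2 h2.
Proof.
move=> h12; rewrite /polymorphism2; congr (_ && _).
  by apply: eq_forallb => a; rewrite h12.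
apply: eq_forallb => c1; congr (_ ==> _); apply: eq_forallb => c2; congr (_ ==> _).
by congr (_ \in C); apply/ffunP => Y; rewrite !ffunE h12.
Qed.

Lemma polymorphism2_snd : polymorphism2 (fun _ y => y).
Proof.
apply/polymorphism2P; split=> // c1 c2 _.
by congr (_ \in C); apply/ffunP => Y; rewrite ffunE.
Qed.

Lemma polymorphism2_swap h : polymorphism2 h -> polymorphism2 (fun x y => h y x).
Proof.
move/polymorphism2P => [idh hC]; apply/polymorphism2P.
by split=> // c1 c2 c1C c2C; apply: hC.
Qed.

Lemma polymorphism2_comp h1 h2 :
  polymorphism2 h1 -> polymorphism2 h2 -> polymorphism2 (fun x y => h1 x (h2 x y)).
Proof.
move=> /polymorphism2P[id1 C1] /polymorphism2P[id2 C2].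
apply/polymorphism2P; split=> [a|c1 c2 c1C c2C]; first by rewrite id2 id1.
have := C1 _ _ c1C (C2 _ _ c1C c2C).
by congr (_ \in C); apply/ffunP => Y; rewrite !ffunE.
Qed.

Lemma polymorphism2_conj (pi : {perm X}) h : symmetric_family C ->
  polymorphism2 h -> polymorphism2 (fun x y => (pi^-1)%g (h (pi x) (pi y))).
Proof.
move=> hsym /polymorphism2P[idh hC]; apply/polymorphism2P.
split=> [a|c1 c2 c1C c2C]; first by rewrite idh permK.
have := hsym pi _ (hC _ _ (hsym pi^-1%g _ c1C) (hsym pi^-1%g _ c2C)).
by congr (_ \in C); apply/ffunP => Y; rewrite !ffunE invgK perm_ksubK.
Qed.

End Polymorphisms.

Definition switch (X : finType) (D : {set X * X}) (x y : X) : X :=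
  if (x, y) \in D then y else x.

Definition edge (X : finType) (u v : X) : {set X * X} := [set (u, v); (v, u)].

Section Switch.
Variable X : finType.

Lemma switchxx (D : {set X * X}) x : switch D x x = x.
Proof. by rewrite /switch; case: ifP. Qed.

Lemma edge_sym (u v s t : X) : ((s, t) \in edge u v) = ((t, s) \in edge u v).
Proof. by rewrite !inE !xpair_eqE orbC andbC [(t == v) && _]andbC. Qed.

Lemma disjoint_edges (u v w : X) : v != w -> [disjoint edge u v & edge u w].
Proof.
move=> vw; rewrite disjoints_subset; apply/subsetP => -[s t].
rewrite !inE !xpair_eqE => /orP[]/andP[/eqP-> /eqP->]; rewrite eqxx (negbTE vw) ?andbF ?orbF /=.
  by apply: contra vw => /andP[/eqP-> /eqP->].
by apply: contra vw => /andP[/eqP-> /eqP->].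
Qed.

Lemma switch_repeat (D1 D2 : {set X * X}) x y z :
  (forall s t, ((s, t) \in D1) = ((t, s) \in D1)) -> [disjoint D1 & D2] ->
  [|| x == y, x == z | y == z] -> switch D1 (switch D1 x y) (switch D2 x z) = x.
Proof.
move=> symD1 dD12 /or3P[]/eqP<-; rewrite ?switchxx /switch.
- by case xzD2: ((x, z) \in D2); rewrite ?(disjointFl dD12 xzD2) //; case: ifP.
- by case xyD1: ((x, y) \in D1); [rewrite -symD1 xyD1 | case: ifP].
- case xyD1: ((x, y) \in D1); first by rewrite (disjointFr dD12 xyD1) -symD1 xyD1.
  by case: ((x, y) \in D2); rewrite ?xyD1 //; case: ifP.
Qed.

End Switch.

Section SwitchSets.
Variables (X : finType) (k : nat) (C : {set cfun X k}).
Hypothesis hsym : symmetric_family C.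

Definition switch_sets : {set {set X * X}} := [set D | polymorphism2 C (switch D)].

Lemma switch_setT : setT \in switch_sets.
Proof.
rewrite inE -(eq_polymorphism2 _ (h1 := fun _ y => y)) ?polymorphism2_snd // => x y.
by rewrite /switch inE.
Qed.

Lemma switch_setI D1 D2 :
  D1 \in switch_sets -> D2 \in switch_sets -> D1 :&: D2 \in switch_sets.
Proof.
rewrite !inE => P1 P2.
rewrite -(eq_polymorphism2 _ (h1 := fun x y => switch D1 x (switch D2 x y))).
  exact: polymorphism2_comp.
move=> x y; rewrite /switch inE.
by case: ((x, y) \in D2); rewrite ?andbT ?andbF //; case: ifP.
Qed.

Definition rev_compl (D : {set X * X}) : {set X * X} := [set t | (t.2, t.1) \notin D].

Lemma switch_set_rev_compl D : D \in switch_sets -> rev_compl D \in switch_sets.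
Proof.
rewrite !inE => /polymorphism2_swap; congr is_true; apply: eq_polymorphism2 => x y.
by rewrite /switch inE /=; case: ifP.
Qed.

Lemma switch_setU D1 D2 :
  D1 \in switch_sets -> D2 \in switch_sets -> D1 :|: D2 \in switch_sets.
Proof.
have -> : D1 :|: D2 = rev_compl (rev_compl D1 :&: rev_compl D2).
  by apply/setP => -[x y]; rewrite !inE /= negb_and !negbK.
by move=> P1 P2; apply/switch_set_rev_compl/switch_setI; apply: switch_set_rev_compl.
Qed.

Lemma switch_set_perm (pi : {perm X}) D :
  D \in switch_sets -> [set t | (pi t.1, pi t.2) \in D] \in switch_sets.
Proof.
rewrite !inE => /(polymorphism2_conj pi hsym).
congr is_true; apply: eq_polymorphism2 => x y.
by rewrite /switch inE /=; case: ifP; rewrite permK.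
Qed.

Definition pair_le (t s : X * X) : Prop :=
  forall D, D \in switch_sets -> t \in D -> s \in D.

Lemma pair_le_trans t s r : pair_le t s -> pair_le s r -> pair_le t r.
Proof. by move=> ts sr D DP tD; apply: sr (ts D DP tD). Qed.

Lemma pair_le_rev t s : pair_le t s -> pair_le (s.2, s.1) (t.2, t.1).
Proof.
move=> ts D DP; apply: contraTT => tND.
by have := ts _ (switch_set_rev_compl DP); rewrite !inE; apply.
Qed.

Lemma pair_le_perm (pi : {perm X}) u v p q :
  pair_le (u, v) (p, q) -> pair_le (pi u, pi v) (pi p, pi q).
Proof. by move=> le_uv D /(switch_set_perm pi) /le_uv; rewrite !inE. Qed.

Definition pair_closure (t : X * X) : {set X * X} :=
  \bigcap_(D in switch_sets | t \in D) D.

Lemma pair_closureP t s : reflect (pair_le t s) (s \in pair_closure t).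
Proof.
apply: (iffP bigcapP) => [ts D DP tD|ts D /andP[]]; last exact: ts.
by apply: ts; rewrite DP.
Qed.

Lemma switch_set_closure t : pair_closure t \in switch_sets.
Proof.
apply: (big_ind (fun D => D \in switch_sets)); [exact: switch_setT | exact: switch_setI |].
by move=> D /andP[].
Qed.

End SwitchSets.

Ltac distinct := rewrite /= ?inE ?negb_or ?andbT;
  repeat (apply/andP; split); by [|rewrite eq_sym].

Section Collapse.
Variables (X : finType) (k : nat) (C : {set cfun X k}).
Hypotheses (hsym : symmetric_family C) (hX6 : 6 <= #|X|).

Local Notation pair_le := (pair_le C).

Let fresh (s : seq X) (small_s : size s < 6) : exists z, z \notin s :=
  exists_notin (leq_trans small_s hX6).

Lemma pair_le_escape u v p q : u != v -> p != q -> pair_le (u, v) (p, q) ->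
  (p, q) \notin edge u v -> exists e1 e2, uniq [:: u; v; e1; e2] /\ pair_le (u, v) (e1, e2).
Proof.
(* A shared endpoint is moved out of {u, v} by relabelling (reversed if needed)
   the inequality itself and chaining the two. *)
move=> uv pq le_uv; rewrite !inE negb_or !xpair_eqE => /andP[nuv nvu].
have [z] := fresh (s := [:: u; v; p; q]) isT.
rewrite !inE !negb_or => /and4P[zu zv zp zq].
have [pu|pu] := eqVneq p u.
  subst p; have qv : q != v by rewrite eqxx in nuv.
  have [pi [piq piu piv]] : exists pi : {perm X}, map pi [:: q; u; v] = [:: u; q; z].
    by apply: perm_map_uniq; distinct.
  have := pair_le_perm hsym (pi := pi) (pair_le_rev le_uv); rewrite /= piq piu piv => le_uq.
  by exists z, q; split; [distinct | apply: pair_le_trans le_uv le_uq].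
have [pv|pv] := eqVneq p v.
  subst p; have qu : q != u by rewrite eqxx in nvu.
  have [pi [piu piv piq]] : exists pi : {perm X}, map pi [:: u; v; q] = [:: v; q; z].
    by apply: perm_map_uniq; distinct.
  have := pair_le_perm hsym (pi := pi) le_uv; rewrite piu piv piq => le_vq.
  by exists q, z; split; [distinct | apply: pair_le_trans le_uv le_vq].
have [qu|qu] := eqVneq q u.
  subst q.
  have [pi [piu piv pip]] : exists pi : {perm X}, map pi [:: u; v; p] = [:: p; u; z].
    by apply: perm_map_uniq; distinct.
  have := pair_le_perm hsym (pi := pi) le_uv; rewrite piu piv pip => le_pu.
  by exists z, p; split; [distinct | apply: pair_le_trans le_uv le_pu].
have [qv|qv] := eqVneq q v.
  subst q.
  have [pi [piv pip piu]] : exists pi : {perm X}, map pi [:: v; p; u] = [:: p; v; z].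
    by apply: perm_map_uniq; distinct.
  have := pair_le_perm hsym (pi := pi) (pair_le_rev le_uv); rewrite /= piv pip piu => le_pv.
  by exists p, z; split; [distinct | apply: pair_le_trans le_uv le_pv].
by exists p, q; split; first distinct.
Qed.

Lemma pair_le_total u v e1 e2 : uniq [:: u; v; e1; e2] -> pair_le (u, v) (e1, e2) ->
  forall a b c d, a != b -> c != d -> pair_le (a, b) (c, d).
Proof.
(* (a, b) <= (z, w) <= (c, d) for a pair (z, w) disjoint from both, each step
   a relabelling of (u, v) <= (e1, e2). *)
move=> uniq_uve le_uve a b c d ab cd.
have [z] := fresh (s := [:: a; b; c; d]) isT.
rewrite !inE !negb_or => /and4P[za zb zc zd].
have [w] := fresh (s := [:: a; b; c; d; z]) isT.
rewrite !inE !negb_or => /and5P[wa wb wc wd wz].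
have [pi [pu pv pe1 pe2]] : exists pi : {perm X}, map pi [:: u; v; e1; e2] = [:: a; b; z; w].
  by apply: (perm_map_uniq uniq_uve); distinct.
have := pair_le_perm hsym (pi := pi) le_uve; rewrite pu pv pe1 pe2 => le_ab_zw.
have [pi' [pu' pv' pe1' pe2']] : exists pi : {perm X}, map pi [:: u; v; e1; e2] = [:: z; w; c; d].
  by apply: (perm_map_uniq uniq_uve); distinct.
have := pair_le_perm hsym (pi := pi') le_uve; rewrite pu' pv' pe1' pe2' => le_zw_cd.
exact: pair_le_trans le_ab_zw le_zw_cd.
Qed.

Variables (D0 : {set X * X}) (x0 y0 x1 y1 : X).
Hypotheses (D0_switch : D0 \in switch_sets C) (x0y0 : x0 != y0) (x1y1 : x1 != y1).
Hypotheses (x0y0_in : (x0, y0) \in D0) (x1y1_out : (x1, y1) \notin D0).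

Lemma pair_le_edge u v p q :
  u != v -> p != q -> pair_le (u, v) (p, q) -> (p, q) \in edge u v.
Proof.
move=> uv pq le_uv; apply: contraT.
move=> /(pair_le_escape uv pq le_uv) [e1 [e2 [uniq_e le_e]]].
have := pair_le_total uniq_e le_e x0y0 x1y1 D0_switch x0y0_in.
by rewrite (negbTE x1y1_out).
Qed.

Lemma switch_set_edge u v : u != v -> edge u v \in switch_sets C.
Proof.
move=> uv; pose E := pair_closure C (u, v) :|: pair_closure C (v, u).
have E_edge : switch E =2 switch (edge u v).
  move=> x y; rewrite /switch; have [<-|xy] := eqVneq x y; first by case: ifP; case: ifP.
  congr (if _ then _ else _); apply/idP/idP.
    rewrite inE => /orP[]/pair_closureP/pair_le_edge; first exact.
    by rewrite eq_sym /edge setUC; apply.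
  by rewrite !inE => /orP[]/eqP[-> ->]; apply/orP; [left | right]; apply/pair_closureP.
have : E \in switch_sets C by apply: switch_setU; apply: switch_set_closure.
by rewrite !inE (eq_polymorphism2 _ E_edge).
Qed.

End Collapse.

Section Conservative.
Variables (X : finType) (k : nat) (C : {set cfun X k}).
Hypotheses (hC : forall c, c \in C -> is_choice_fun c) (hCne : C != set0).
Hypotheses (hsym : symmetric_family C) (le2k : 2 <= k) (ltkX : k < #|X|).

Lemma choice_fun_attains (Y : ksub X k) x : x \in val Y -> exists2 c, c \in C & c Y = x.
Proof.
move=> xY; have [c0 c0C] := set0Pn _ hCne; have c0Y := hC c0C Y.
exists (perm_act (tperm x (c0 Y)) c0); first exact: hsym.
have fixY : perm_ksub (tperm x (c0 Y)) Y = Y.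
  apply/val_inj/eqP; rewrite perm_ksub_val eqEcard card_imset ?leqnn ?andbT; last exact: perm_inj.
  by apply/subsetP => _ /imsetP[z zY ->]; case: tpermP => // ->.
by rewrite /perm_act ffunE fixY tpermV tpermR.
Qed.

Lemma polymorphism2_conservative h x y : polymorphism2 C h -> (h x y == x) || (h x y == y).
Proof.
(* Otherwise, on a k-set Y containing x and y but not h x y, combining members
   of C that pick x and y yields a member of C picking outside Y. *)
move=> /polymorphism2P[_ hC2]; apply: contraT; rewrite negb_or => /andP[zx zy].
have sxyz : [set x; y] \subset [set~ h x y].
  by apply/subsetP => w; rewrite !inE => /orP[]/eqP->; rewrite eq_sym.
have card_xy : #|[set x; y]| <= k <= #|[set~ h x y]|.
  apply/andP; split; first by rewrite cards2 (leq_trans _ le2k) //; case: (_ != _).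
  by rewrite cardsC1 -ltnS (ltn_predK ltkX).
have [Y0 [sxyY sYz /eqP cardY]] := exists_subset_between sxyz card_xy.
pose Y : ksub X k := exist _ Y0 cardY.
have [c1 c1C c1Y] := choice_fun_attains (Y := Y) (subsetP sxyY _ (set21 x y)).
have [c2 c2C c2Y] := choice_fun_attains (Y := Y) (subsetP sxyY _ (set22 x y)).
have := hC (hC2 _ _ c1C c2C) Y; rewrite ffunE c1Y c2Y => /(subsetP sYz).
by rewrite !inE eqxx.
Qed.

Lemma nontrivial_switch_set h x0 y0 x1 y1 :
  polymorphism2 C h -> h x0 y0 != x0 -> h x1 y1 != y1 ->
  exists D, [/\ D \in switch_sets C, x0 != y0, x1 != y1, (x0, y0) \in D & (x1, y1) \notin D].
Proof.
move=> Ph n0 n1; have /polymorphism2P[idh _] := Ph.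
exists [set t | h t.1 t.2 == t.2]; split.
- rewrite inE -(eq_polymorphism2 _ (h1 := h)) // => x y; rewrite /switch inE /=.
  have /orP[/eqP|/eqP->] := polymorphism2_conservative x y Ph; last by rewrite eqxx.
  by case: eqP.
- by apply: contraNneq n0 => <-; rewrite idh.
- by apply: contraNneq n1 => ->; rewrite idh.
- by rewrite inE /=; have /orP[] := polymorphism2_conservative x0 y0 Ph; rewrite ?(negbTE n0).
- by rewrite inE.
Qed.

End Conservative.

Section Arity.
Variables (X : finType) (k : nat) (C : {set cfun X k}).

Definition curry2 (f : {ffun 'I_2 -> X} -> X) (x y : X) : X :=
  f [ffun i => if i == ord0 then x else y].

Lemma curry2E f b : f b = curry2 f (b ord0) (b ord_max).
Proof.
rewrite /curry2; congr f; apply/ffunP => i; rewrite ffunE.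
have [->|i_neq0] := eqVneq i ord0; first by [].
by congr (b _); apply: val_inj; case: i i_neq0 => -[|[|]].
Qed.

Lemma polymorphism2_curry2 f : in_F C f -> polymorphism2 C (curry2 f).
Proof.
case=> idf Cf; apply/polymorphism2P; split=> [a|c1 c2 c1C c2C].
  by rewrite /curry2 -[RHS]idf; congr f; apply/ffunP => i; rewrite !ffunE; case: ifP.
have csC (i : 'I_2) : (if i == ord0 then c1 else c2) \in C by case: ifP.
have := Cf _ csC; congr (_ \in C); apply/ffunP => Y; rewrite !ffunE; congr f.
by apply/ffunP => i; rewrite !ffunE; case: ifP.
Qed.

Lemma not_monarchy2 f : ~ monarchy f ->
  (exists x y, curry2 f x y != x) /\ (exists x y, curry2 f x y != y).
Proof.
move=> not_mf; split.
  have [fst|/forallPn[x /forallPn[y nxy]]] := boolP [forall x, forall y, curry2 f x y == x];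
    last by exists x, y.
  by case: not_mf; exists ord0 => b; rewrite curry2E; apply/eqP/(forallP (forallP fst _)).
have [snd|/forallPn[x /forallPn[y nxy]]] := boolP [forall x, forall y, curry2 f x y == y];
  last by exists x, y.
by case: not_mf; exists ord_max => b; rewrite curry2E; apply/eqP/(forallP (forallP snd _)).
Qed.

Lemma in_F_polymorphism2_comp h1 h2 h3 :
  polymorphism2 C h1 -> polymorphism2 C h2 -> polymorphism2 C h3 ->
  in_F C (fun b : {ffun 'I_3 -> X} => h1 (h2 (b ord0) (b i1)) (h3 (b ord0) (b i2))).
Proof.
move=> /polymorphism2P[id1 C1] /polymorphism2P[id2 C2] /polymorphism2P[id3 C3].
split=> [a|cs csC]; first by rewrite !ffunE id2 id3 id1.
have := C1 _ _ (C2 _ _ (csC ord0) (csC i1)) (C3 _ _ (csC ord0) (csC i2)).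
by congr (_ \in C); apply/ffunP => Y; rewrite !ffunE.
Qed.

End Arity.

Theorem claim13p6 (X : finType) (k : nat)
  (hX : 5 <= #|X|) (hk1 : 5 < k) (hk2 : k < #|X| - 5)
  (C : {set cfun X k})
  (hC : forall c, c \in C -> is_choice_fun c)
  (hCne : C != set0)
  (hsym : symmetric_family C)
  (hr : rF_eq C 2)
  (a1 a2 a3 : X) (h12 : a1 != a2) (h13 : a1 != a3) (h23 : a2 != a3) :
  exists g : {ffun 'I_3 -> X} -> X,
    in_F C g /\
    (forall b : {ffun 'I_3 -> X},
        (exists i j : 'I_3, i != j /\ b i = b j) -> g b = b ord0) /\
    g [ffun i : 'I_3 => nth a1 [:: a1; a2; a3] i] = a2.
Proof.
have le2k : 2 <= k by lia.
have ltkX : k < #|X| by lia.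
have le6X : 6 <= #|X| by lia.
have [[f [Ff not_mf]] _] := hr.
have [[x0 [y0 n0]] [x1 [y1 n1]]] := not_monarchy2 not_mf.
have [D0 [D0_switch x0y0 x1y1 x0y0_in x1y1_out]] :=
  nontrivial_switch_set hC hCne hsym le2k ltkX (polymorphism2_curry2 Ff) n0 n1.
have edge_pol u v : u != v -> polymorphism2 C (switch (edge u v)).
  move=> uv; have := switch_set_edge hsym le6X D0_switch x0y0 x1y1 x0y0_in x1y1_out uv.
  by rewrite inE.
exists (fun b => switch (edge a1 a2) (switch (edge a1 a2) (b ord0) (b i1))
                                     (switch (edge a1 a3) (b ord0) (b i2))).
split; [|split].
- by apply: in_F_polymorphism2_comp; apply: edge_pol.
- move=> b [i [j [ij bij]]]; apply: switch_repeat (@edge_sym _ _ _) (disjoint_edges _ h23) _.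
  exact: ord3_repeat ij bij.
- by rewrite !ffunE /switch !inE !xpair_eqE !eqxx /= ![_ == a1]eq_sym (negbTE h12) (negbTE h13).
Qed.
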